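(* Let $q$ be a prime power and $0\le k\le n$. Let $1\le j\le n$ and let $\begin{pmatrix} v_j & \cdots & v_1\\ X_j & \cdots & X_1\end{pmatrix}$ be a $(k+1)\times j$ array which occurs as the first $j$ columns (columns $j,\dots,1$) of the extended representation $\mathrm{EXT}(Y)$ of at least one $Y\in\mathcal{G}_q(n,k)$. Let $w_j=\sum_{\ell=1}^{j}v_\ell$. Then the number $N\begin{pmatrix} v_j & \cdots & v_1\\ X_j & \cdots & X_1\end{pmatrix}$ of subspaces $X\in\mathcal{G}_q(n,k)$ whose extended representation has exactly these first $j$ columns equals $\left[\begin{smallmatrix} n-j\\ k-w_j\end{smallmatrix}\right]_q$.
   Context: $\mathbb{F}_q$ is the finite field of size $q$; its elements are identified with $\mathbb{Z}_q=\{0,\dots,q-1\}$ by a fixed bijection (with $0\mapsto 0$, $1\mapsto 1$). $\mathcal{G}_q(n,k)$ is the set of all $k$-dimensional subspaces of $\mathbb{F}_q^n$. The $q$-ary Gaussian coefficient is $\left[\begin{smallmatrix} n\\ k\end{smallmatrix}\right]_q=\prod_{i=0}^{k-1}\frac{q^{n-i}-1}{q^{k-i}-1}$, with $\left[\begin{smallmatrix} n\\ 0\end{smallmatrix}\right]_q=1$ and $\left[\begin{smallmatrix} n\\ k\end{smallmatrix}\right]_q=0$ if $k>n$ or $k<0$. For $X\in\mathcal{G}_q(n,k)$, $\mathrm{RE}(X)$ is the unique $k\times n$ matrix in reduced row echelon form whose rows span $X$; its columns are labelled $X_n,\dots,X_2,X_1$ from left to right (so $X_1$ is the rightmost column). The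 identifying vector $v(X)=(v(X)_n,\dots,v(X)_1)$ is the binary vector of weight $k$ with $v(X)_i=1$ iff column $X_i$ of $\mathrm{RE}(X)$ contains the leading one (pivot) of some row. The extended representation $\mathrm{EXT}(X)$ is the $(k+1)\times n$ matrix whose top row is $v(X)$ and whose remaining $k$ rows are $\mathrm{RE}(X)$; its $i$-th column is $\binom{v(X)_i}{X_i}$, and ''the first $j$ columns'' means the columns indexed $1,\dots,j$ (the rightmost $j$ columns). *)

From HB Require Import structures.
From mathcomp Require Import all_boot all_order all_algebra.
Set Implicit Arguments. Unset Strict Implicit. Unset Printing Implicit Defensive.
Import GRing.Theory.
Local Open Scope ring_scope.

(* Columns of a k x n matrix are indexed by 'I_n with 0-based index c from the
   left; the paper's label of column c is X_(n - c).  So the paper's "first j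
   columns" (labels j,...,1) are the rightmost j columns, 0-based indices
   n-j, ..., n-1, appearing in this left-to-right order. *)

Section Defs.
Variable F : finFieldType.

(* Subspaces of F^n are represented canonically (mxalgebra) by square
   matrices X with <<X>> = X; the subspace is the row space of X. *)
Definition Grass (n k : nat) : {set 'M[F]_n} :=
  [set X : 'M[F]_n | (<<X>>%MS == X) && (\rank X == k)].

Definition is_pivot (k n : nat) (M : 'M[F]_(k, n)) (i : 'I_k) (c : 'I_n) : bool :=
  (M i c == 1) && [forall c' : 'I_n, (c' < c)%N ==> (M i c' == 0)].

Definition is_rref (k n : nat) (M : 'M[F]_(k, n)) : bool :=
  [&& [forall i : 'I_k, exists c : 'I_n, is_pivot M i c],
      [forall i : 'I_k, forall i' : 'I_k, forall c : 'I_n, forall c' : 'I_n,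
         [&& (i < i')%N, is_pivot M i c & is_pivot M i' c'] ==> (c < c')%N] &
      [forall i : 'I_k, forall c : 'I_n, forall i' : 'I_k,
         (is_pivot M i c && (i' != i)) ==> (M i' c == 0)]].

Definition RE (k n : nat) (X : 'M[F]_n) : 'M[F]_(k, n) :=
  odflt 0 [pick M : 'M[F]_(k, n) | is_rref M && (<<M>>%MS == X)].

Definition idvec (k n : nat) (X : 'M[F]_n) : 'rV[F]_n :=
  \row_c (if [exists i, is_pivot (RE k X) i c] then 1 else 0).

Definition EXT (k n : nat) (X : 'M[F]_n) : 'M[F]_(k.+1, n) :=
  col_mx (idvec k X) (RE k X).

Definition entry (r n : nat) (M : 'M[F]_(r, n)) (i : 'I_r) (c : nat) : F :=
  if insub c is Some c' then M i c' else 0.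

Definition firstcols (r n : nat) (j : nat) (M : 'M[F]_(r, n)) : 'M[F]_(r, j) :=
  \matrix_(i < r, c < j) entry M i (n - j + c).

End Defs.

Definition gauss (q n k : nat) : nat :=
  if (k <= n)%N then
    ((\prod_(i < k) (q ^ (n - i) - 1)) %/ (\prod_(i < k) (q ^ (k - i) - 1)))%N
  else 0%N.

(* A subspace is determined by its reduced row echelon form, so it suffices to
   count k x n RREF matrices whose extended representation has prescribed
   rightmost j columns.  Since pivots move strictly to the right, the w rows whose
   pivots lie in those columns are the last w rows; they vanish left of their
   pivots and are therefore completely prescribed.  The first k - w rows are
   prescribed in the last j columns, and what remains free is their left
   (k - w) x (n - j) block, which is an arbitrary RREF matrix.  Splitting m x p
   RREF matrices according to whether the last column holds a pivot gives the
   q-Pascal recurrence, so there are [p, m]_q of them. *)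

From HB Require Import structures.
From mathcomp Require Import all_boot all_order all_algebra.
From mathcomp Require Import zify.
Set Implicit Arguments. Unset Strict Implicit. Unset Printing Implicit Defensive.
Import GRing.Theory.
Local Open Scope ring_scope.

Lemma ltn_homo_ord_geq k (f : 'I_k -> 'I_k) :
  (forall i i' : 'I_k, (i < i')%N -> (f i < f i')%N) -> forall i : 'I_k, (i <= f i)%N.
Proof.
move=> fS [i lt] /=; elim: i lt => // i IH lt.
by have := IH (ltnW lt); have := fS (Ordinal (ltnW lt)) (Ordinal lt) (ltnSn i); lia.
Qed.

Lemma ltn_homo_ord_id k (f : 'I_k -> 'I_k) :
  (forall i i' : 'I_k, (i < i')%N -> (f i < f i')%N) -> f =1 id.
Proof.
move=> fS i; apply/val_inj/eqP; rewrite /= eqn_leq ltn_homo_ord_geq // andbT.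
pose g i := rev_ord (f (rev_ord i)).
have gS (a b : 'I_k) : (a < b)%N -> (g a < g b)%N.
  move=> lt; have /fS : (rev_ord b < rev_ord a)%N by rewrite /=; have := ltn_ord b; lia.
  by rewrite /g /=; have := ltn_ord (f (rev_ord a)); lia.
have := ltn_homo_ord_geq gS (rev_ord i); rewrite /g rev_ordK /=.
by have := ltn_ord (f i); lia.
Qed.

Lemma card_ltn_ord k x : (x <= k)%N -> #|[set i : 'I_k | (i < x)%N]| = x.
Proof.
move=> xk; have widen_inj : injective (widen_ord xk) by move=> a b [] /val_inj.
rewrite -[RHS]card_ord -cardsT -(card_imset _ widen_inj); apply: eq_card => i.
rewrite inE; apply/idP/imsetP => [lt | [i' _ ->]]; last exact: ltn_ord i'.
by exists (Ordinal lt) => //; apply: val_inj.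
Qed.

Lemma nondecreasing_threshold k n (P : 'I_k -> 'I_n) d :
  (forall i i' : 'I_k, (i <= i')%N -> (P i <= P i')%N) ->
  forall i, (P i < d)%N = (i < k - #|[set i | (d <= P i)%N]|)%N.
Proof.
move=> Pmono; set D := [set i | (P i < d)%N].
have cardD : #|D| = (k - #|[set i | (d <= P i)%N]|)%N.
  have -> : [set i | (d <= P i)%N] = ~: D by apply/setP => i; rewrite !inE leqNgt.
  by rewrite [LHS]cardsCs card_ord.
move=> i; rewrite -cardD; apply/idP/idP => [Di | lt].
  have /subset_leq_card : [set i' : 'I_k | (i' < i.+1)%N] \subset D.
    apply/subsetP => i'; rewrite !inE ltnS => le.
    exact: leq_ltn_trans (Pmono _ _ le) Di.
  by rewrite card_ltn_ord.
apply: contraTT lt; rewrite -leqNgt => Di.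
have /subset_leq_card : D \subset [set i' : 'I_k | (i' < i)%N].
  apply/subsetP => i'; rewrite !inE => lt; rewrite ltnNge; apply: contraL lt => le.
  by rewrite -leqNgt (leq_trans Di (Pmono _ _ le)).
by rewrite card_ltn_ord ?(ltnW (ltn_ord i)) // -leqNgt.
Qed.

(** * Pivots and reduced row echelon form *)

Section PivotMap.
Variable F : finFieldType.

Definition leads n (v : 'rV[F]_n) (c : 'I_n) : bool :=
  (v 0 c != 0) && [forall c' : 'I_n, (c' < c)%N ==> (v 0 c' == 0)].

Lemma leads_uniq n (v : 'rV[F]_n) c c' : leads v c -> leads v c' -> c = c'.
Proof.
have lt_leads a b : leads v a -> leads v b -> ~ (a < b)%N.
  by move=> /andP[va _] /andP[_ /forallP/(_ a)]; rewrite (negbTE va) implybF => /negP.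
move=> vc vc'; apply/val_inj; case: (ltngtP c c') => // lt.
  by case: (lt_leads _ _ vc vc' lt).
by case: (lt_leads _ _ vc' vc lt).
Qed.

Lemma leads_exists n (v : 'rV[F]_n) : v != 0 -> exists c, leads v c.
Proof.
move=> v0; have [c vc] : exists c, v 0 c != 0.
  apply/existsP; apply: contraR v0 => /existsPn v0; apply/eqP/rowP => c.
  by rewrite mxE; apply/eqP/negPn.
have [c' vc' c'_min] := @arg_minnP _ c (fun c => v 0 c != 0) val vc.
exists c'; rewrite /leads vc'; apply/forallP => x; apply/implyP => lt.
by apply: contraLR lt => /c'_min; rewrite -leqNgt.
Qed.

Lemma is_pivot_eq k k' n (M : 'M[F]_(k, n)) (N : 'M[F]_(k', n)) i i' c :
  (forall c, M i c = N i' c) -> is_pivot M i c = is_pivot N i' c.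
Proof.
by move=> E; rewrite /is_pivot E; congr (_ && _); apply: eq_forallb => c'; rewrite E.
Qed.

Lemma pivot1 k n (M : 'M[F]_(k, n)) i c : is_pivot M i c -> M i c = 1.
Proof. by case/andP=> /eqP. Qed.

Lemma pivot0 k n (M : 'M[F]_(k, n)) i c (c' : 'I_n) :
  is_pivot M i c -> (c' < c)%N -> M i c' = 0.
Proof. by case/andP=> _ /forallP/(_ c')/implyP H /H/eqP. Qed.

Lemma pivot_leads k n (M : 'M[F]_(k, n)) i c : is_pivot M i c -> leads (row i M) c.
Proof.
move=> pc; rewrite /leads !mxE (pivot1 pc) oner_eq0.
by apply/forallP => c'; apply/implyP => /(pivot0 pc); rewrite mxE => ->.
Qed.

Lemma pivot_uniq k n (M : 'M[F]_(k, n)) i c c' :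
  is_pivot M i c -> is_pivot M i c' -> c = c'.
Proof. by move=> /pivot_leads pc /pivot_leads; apply: leads_uniq. Qed.

Definition pivot_map k n (M : 'M[F]_(k, n)) (p : 'I_k -> 'I_n) : Prop :=
  [/\ forall i, is_pivot M i (p i),
      forall i i' : 'I_k, (i < i')%N -> (p i < p i')%N &
      forall i i', i' != i -> M i' (p i) = 0].

Lemma is_rrefP k n (M : 'M[F]_(k, n)) : reflect (exists p, pivot_map M p) (is_rref M).
Proof.
apply: (iffP and3P) => [[/forallP H1 /forallP H2 /forallP H3] | [p [P1 P2 P3]]].
  have /fin_all_exists[p Hp] i : exists c, is_pivot M i c by apply/existsP.
  exists p; split=> // [i i' lt | i i' ne].
    by move: (H2 i) => /forallP/(_ i')/forallP/(_ (p i))/forallP/(_ (p i'))/implyP;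
      apply; rewrite lt !Hp.
  apply/eqP; move: (H3 i) => /forallP/(_ (p i))/forallP/(_ i')/implyP.
  by apply; rewrite Hp ne.
split; apply/forallP => i; first by apply/existsP; exists (p i).
  apply/forallP => i'; apply/forallP => c; apply/forallP => c'.
  apply/implyP => /and3P[lt pc pc'].
  by rewrite (pivot_uniq pc (P1 i)) (pivot_uniq pc' (P1 i')) P2.
apply/forallP => c; apply/forallP => i'; apply/implyP => /andP[pc ne].
by rewrite (pivot_uniq pc (P1 i)) P3.
Qed.

Section PivotMapTheory.
Variables (k n : nat) (M : 'M[F]_(k, n)) (p : 'I_k -> 'I_n).
Hypothesis Mp : pivot_map M p.

Lemma pivot_map_col i i' : M i' (p i) = (i' == i)%:R.
Proof.
have [P1 _ P3] := Mp.
by case: eqVneq => [->|ne]; [rewrite (pivot1 (P1 i)) | rewrite P3].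
Qed.

Lemma pivot_map_inj : injective p.
Proof.
have [_ P2 _] := Mp.
by move=> i i' e; apply/val_inj; case: (ltngtP i i') => // /P2; rewrite e ltnn.
Qed.

Lemma pivot_map_leq (i i' : 'I_k) : (i <= i')%N -> (p i <= p i')%N.
Proof.
have [_ P2 _] := Mp.
by rewrite leq_eqVlt => /orP[/eqP/val_inj -> // | /P2/ltnW].
Qed.

Lemma mulmx_pivot_map (c : 'rV[F]_k) l : (c *m M) 0 (p l) = c 0 l.
Proof.
rewrite mxE (bigD1 l) //= pivot_map_col eqxx mulr1 big1 ?addr0 // => i ne.
by rewrite pivot_map_col (negbTE ne) mulr0.
Qed.

Lemma pivot_map_rank : \rank M = k.
Proof.
apply/eqP; apply/row_freeP; exists (\matrix_(c, l) (c == p l)%:R).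
apply/matrixP => i l; rewrite !mxE (bigD1 (p l)) //= mxE eqxx mulr1 big1 ?addr0.
  by rewrite pivot_map_col.
by move=> c ne; rewrite mxE (negbTE ne) mulr0.
Qed.

Lemma submx_pivot_map (v : 'rV[F]_n) :
  (v <= M)%MS -> v = (\row_l v 0 (p l)) *m M.
Proof.
by case/submxP=> c ->; congr (_ *m _); apply/rowP => l; rewrite mxE mulmx_pivot_map.
Qed.

Lemma leads_mulmx_pivot_map (c : 'rV[F]_k) l : leads c l -> leads (c *m M) (p l).
Proof.
have [P1 P2 _] := Mp.
case/andP=> cl0 /forallP cl; rewrite /leads mulmx_pivot_map cl0; apply/forallP => x.
apply/implyP => xl; rewrite mxE big1 // => l' _.
have [lt|ge] := ltnP l' l; first by move/implyP: (cl l') => /(_ lt)/eqP ->; rewrite mul0r.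
by rewrite (pivot0 (P1 l')) ?mulr0 // (leq_trans xl) // pivot_map_leq.
Qed.

End PivotMapTheory.

Lemma rref_uniq k n (M N : 'M[F]_(k, n)) :
  is_rref M -> is_rref N -> (M == N)%MS -> M = N.
Proof.
move=> /is_rrefP[p Mp] /is_rrefP[r Nr] /andP[_ NM].
have rowN i : row i N = (\row_l N i (p l)) *m M.
  rewrite {1}(submx_pivot_map Mp (submx_trans (row_sub i N) NM)).
  by congr (_ *m _); apply/rowP => l; rewrite !mxE.
have r_in_p i : exists l, r i = p l.
  have [N1 _ _] := Nr.
  have /leads_exists[l cl] : \row_l N i (p l) != 0.
    apply/eqP => c0; have := congr1 (fun v : 'rV_n => v 0 (r i)) (rowN i).
    by rewrite /= c0 mul0mx !mxE (pivot1 (N1 i)) => /eqP; rewrite oner_eq0.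
  exists l; apply: leads_uniq (pivot_leads (N1 i)) _.
  by rewrite rowN; apply: leads_mulmx_pivot_map.
have /fin_all_exists[f rpf] := r_in_p.
have f_id : f =1 id.
  apply: ltn_homo_ord_id => i i' lt; rewrite ltnNge; apply/negP => /(pivot_map_leq Mp).
  by have [_ N2 _] := Nr; rewrite -!rpf leqNgt N2.
have rp i : r i = p i by rewrite rpf f_id.
apply/row_matrixP => i; rewrite rowN rowE; congr (_ *m _); apply/rowP => l.
by rewrite !mxE -rp (pivot_map_col Nr) eq_sym.
Qed.

End PivotMap.

(** * Existence of the reduced row echelon form *)

Section RrefExistence.
Variable F : finFieldType.

Definition hyperplane n (p : 'I_n) : 'M[F]_n := kermx (\col_c ((c == p)%:R : F)).

Lemma sub_hyperplane n (p : 'I_n) (v : 'rV[F]_n) :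
  (v <= hyperplane p)%MS = (v 0 p == 0).
Proof.
have vdelta : v *m \col_c ((c == p)%:R : F) = (v 0 p)%:M.
  apply/rowP => a; rewrite ord1 !mxE (bigD1 p) //= mxE eqxx mulr1 big1 ?addr0 //.
  by move=> c ne; rewrite mxE (negbTE ne) mulr0.
by rewrite sub_kermx vdelta -scalemx1 scalemx_eq0 oner_eq0 orbF.
Qed.

Lemma rank_hyperplane n (p : 'I_n) : \rank (hyperplane p) = n.-1.
Proof.
rewrite mxrank_ker -subn1; congr (_ - _)%N; apply/eqP.
rewrite eqn_leq rank_leq_col lt0n mxrank_eq0; apply/eqP => /matrixP/(_ p 0).
by rewrite !mxE eqxx => /eqP; rewrite oner_eq0.
Qed.

Lemma rank_cap_hyperplane m n (X : 'M[F]_(m, n)) (p : 'I_n) (u : 'rV[F]_n) :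
  (u <= X)%MS -> u 0 p != 0 -> \rank (X :&: hyperplane p)%MS = (\rank X).-1.
Proof.
move=> uX up.
have lt_rank : (\rank (X :&: hyperplane p) < \rank X)%N.
  apply: rank_ltmx; rewrite ltmxE capmxSl /=; apply/negP => XH.
  have : (u <= hyperplane p)%MS by apply: submx_trans (submx_trans uX XH) (capmxSr _ _).
  by rewrite sub_hyperplane (negbTE up).
have := mxrank_sum_cap X (hyperplane p); have := rank_leq_col (X + hyperplane p)%MS.
by rewrite rank_hyperplane; have := ltn_ord p; lia.
Qed.

Lemma row_space_lead m n (X : 'M[F]_(m, n)) : X != 0 ->
  exists p (u : 'rV[F]_n), [/\ (u <= X)%MS, u 0 p = 1 &
    forall v : 'rV[F]_n, (v <= X)%MS -> forall c : 'I_n, (c < p)%N -> v 0 c = 0].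
Proof.
move=> X0; have [c0 Xc0] : exists c, [exists i, X i c != 0].
  apply/existsP; apply: contraR X0 => /existsPn X0; apply/eqP/matrixP => i c.
  by move/existsPn/(_ i)/negPn/eqP: (X0 c); rewrite mxE.
have [p /existsP[i Xip] p_min] := @arg_minnP _ c0 (fun c => [exists i, X i c != 0]) val Xc0.
exists p, ((X i p)^-1 *: row i X); split.
- by rewrite scalemx_sub ?row_sub.
- by rewrite !mxE mulVf.
move=> v /submxP[D ->] c lt; rewrite mxE big1 // => i' _.
suff -> : X i' c = 0 by rewrite mulr0.
apply/eqP; apply: contraLR lt => Xc; rewrite -leqNgt; apply: p_min.
by apply/existsP; exists i'.
Qed.

Lemma pivot_map_col_mx k n (t : 'rV[F]_n) (M : 'M[F]_(k, n)) (p : 'I_n) q :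
  pivot_map M q -> t 0 p = 1 -> (forall c : 'I_n, (c < p)%N -> t 0 c = 0) ->
  (forall j, t 0 (q j) = 0) -> (forall j, (p < q j)%N) ->
  pivot_map (col_mx t M : 'M_(1 + k, n)) (fun i => if split i is inr j then q j else p).
Proof.
move=> [M1 M2 M3] tp tc tq pq; split.
- move=> i; case: split_ordP => [i0 -> | j ->].
    rewrite (is_pivot_eq (N := t) (i' := i0)) => [|c]; last by rewrite col_mxEu.
    rewrite ord1; apply/andP; split; first by rewrite tp.
    by apply/forallP => c; apply/implyP => /tc ->.
  by rewrite (is_pivot_eq (N := M) (i' := j)) => [|c]; rewrite ?col_mxEd.
- move=> i i'; case: (split_ordP i) => [i0 -> | j ->];
    case: (split_ordP i') => [i0' -> | j' ->];
    rewrite ?ord1 /= ?ltnn ?ltn0 ?ltn_add2l // => lt; exact: M2 lt.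
- move=> i i'; case: (split_ordP i) => [i0 -> | j ->];
    case: (split_ordP i') => [i0' -> | j' ->].
  + by rewrite !ord1 eqxx.
  + by rewrite col_mxEd => _; apply: pivot0 (M1 j') (pq j').
  + by rewrite col_mxEu => _; rewrite ord1 tq.
  + by rewrite col_mxEd (inj_eq (@rshift_inj _ _)); apply: M3.
Qed.

Lemma rref_exists r m n (X : 'M[F]_(m, n)) : \rank X = r ->
  exists M : 'M[F]_(r, n), is_rref M && (M == X)%MS.
Proof.
elim: r m X => [|r IH] m X rX.
  exists 0; apply/andP; split; first by apply/and3P; split; apply/forallP => -[].
  by move/eqP: rX; rewrite mxrank_eq0 => /eqP ->; rewrite /eqmx !sub0mx.
have /row_space_lead[p [u [uX up X_lead]]] : X != 0 by rewrite -mxrank_eq0 rX.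
pose Y := (X :&: hyperplane p)%MS.
have rY : \rank Y = r by rewrite (rank_cap_hyperplane uX) ?rX // up oner_eq0.
have [M' /andP[/is_rrefP[q M'q] /andP[M'Y _]]] := IH _ Y rY.
have M'X : (M' <= X)%MS := submx_trans M'Y (capmxSl _ _).
have M'H : (M' <= hyperplane p)%MS := submx_trans M'Y (capmxSr _ _).
have M'_lead (w : 'rV[F]_n) (c : 'I_n) : (w <= M')%MS -> (c <= p)%N -> w 0 c = 0.
  move=> wM'; rewrite leq_eqVlt => /orP[/eqP/val_inj -> | lt].
    by apply/eqP; rewrite -sub_hyperplane (submx_trans wM').
  exact: X_lead (submx_trans wM' M'X) _ lt.
have pq j : (p < q j)%N.
  have [M'1 _ _] := M'q; rewrite ltnNge; apply/negP => /(M'_lead _ _ (row_sub j M')).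
  by rewrite mxE (pivot1 (M'1 j)) => /eqP; rewrite oner_eq0.
pose w := (\row_l u 0 (q l)) *m M'.
have wM' : (w <= M')%MS by apply: submxMl.
pose t := u - w.
have tE (c : 'I_n) : t 0 c = u 0 c - w 0 c by rewrite mxE [X in _ + X]mxE.
have tX : (t <= X)%MS by rewrite addmx_sub ?eqmx_opp ?(submx_trans wM' M'X).
have rM : is_rref (col_mx t M' : 'M_(1 + r, n)).
  apply/is_rrefP; eexists; apply: (pivot_map_col_mx M'q _ _ _ pq).
  - by rewrite tE up (M'_lead _ _ wM') // subr0.
  - by move=> c lt; rewrite tE (X_lead _ uX _ lt) (M'_lead _ _ wM') ?subr0 // ltnW.
  - by move=> j; rewrite tE (mulmx_pivot_map M'q) mxE subrr.
exists (col_mx t M'); rewrite rM /=.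
have sub : (col_mx t M' <= X)%MS by rewrite col_mx_sub tX.
have /is_rrefP[P rP] := rM.
by rewrite -(mxrank_leqif_eq sub).2 (pivot_map_rank rP) rX.
Qed.

End RrefExistence.

(** * Filling the upper left block of a matrix *)

Section Blocks.
Variable F : finFieldType.

Definition entry_at r s (M : 'M[F]_(r, s)) (i c : nat) : F :=
  if insub i is Some i' then entry M i' c else 0.

Lemma entry_atE r s (M : 'M[F]_(r, s)) i c (hi : (i < r)%N) (hc : (c < s)%N) :
  entry_at M i c = M (Ordinal hi) (Ordinal hc).
Proof.
by rewrite /entry_at /entry (insubT (fun x => x < r)%N hi) (insubT (fun x => x < s)%N hc).
Qed.

Lemma entry_at_ord r s (M : 'M[F]_(r, s)) (i : 'I_r) (c : 'I_s) : entry_at M i c = M i c.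
Proof. by rewrite /entry_at /entry !valK. Qed.

Lemma entry_at_out r s (M : 'M[F]_(r, s)) i c : (r <= i)%N -> entry_at M i c = 0.
Proof. by move=> h; rewrite /entry_at insubN // -leqNgt. Qed.

Variables (m d k n : nat).
Hypotheses (mk : (m <= k)%N) (dn : (d <= n)%N).

Definition ulblock (N : 'M[F]_(k, n)) : 'M[F]_(m, d) := \matrix_(i, c) entry_at N i c.

(* The rows below L are zero in the first d columns. *)
Definition paste (L : 'M[F]_(m, d)) (R : 'M[F]_(k, n)) : 'M[F]_(k, n) :=
  \matrix_(i, c) if (c < d)%N then entry_at L i c else R i c.

Lemma pasteE L R i c : paste L R i c = if (c < d)%N then entry_at L i c else R i c.
Proof. exact: mxE. Qed.

Lemma ulblockE N i c : ulblock N i c = N (widen_ord mk i) (widen_ord dn c).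
Proof.
rewrite mxE (entry_atE _ (leq_trans (ltn_ord i) mk) (leq_trans (ltn_ord c) dn)).
by congr (N _ _); apply: val_inj.
Qed.

Lemma pasteK R : cancel (paste^~ R) ulblock.
Proof.
move=> L; apply/matrixP => i c; rewrite ulblockE pasteE /= ltn_ord.
by rewrite (entry_atE _ (ltn_ord i) (ltn_ord c)); congr (L _ _); apply: val_inj.
Qed.

Lemma eq_paste L (R R' : 'M[F]_(k, n)) :
  (forall i (c : 'I_n), (d <= c)%N -> R i c = R' i c) -> paste L R = paste L R'.
Proof.
move=> E; apply/matrixP => i c; rewrite !pasteE; case: ifP => // cd.
by rewrite E // leqNgt cd.
Qed.

Lemma pivot_map_paste L R (pL : 'I_m -> 'I_d) (Q : 'I_k -> 'I_n) :
  pivot_map L pL ->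
  (forall i : 'I_k, (m <= i)%N -> is_pivot R i (Q i) /\ (d <= Q i)%N) ->
  (forall i i' : 'I_k, (m <= i)%N -> (i < i')%N -> (Q i < Q i')%N) ->
  (forall i i' : 'I_k, (m <= i)%N -> i' != i -> R i' (Q i) = 0) ->
  exists P, [/\ pivot_map (paste L R) P, forall i : 'I_k, (m <= i)%N -> P i = Q i
             & forall i : 'I_k, (i < m)%N -> (P i < d)%N].
Proof.
move=> [L1 L2 L3] RQ Q2 Q3.
pose P i := if insub (val i) is Some i' then widen_ord dn (pL i') else Q i.
have PE (i : 'I_k) (lt : (i < m)%N) : P i = widen_ord dn (pL (Ordinal lt)).
  by rewrite /P insubT.
have PQ (i : 'I_k) : (m <= i)%N -> P i = Q i by move=> ge; rewrite /P insubN // -leqNgt.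
have Pd (i : 'I_k) : (i < m)%N -> (P i < d)%N by move=> lt; rewrite (PE _ lt) /= ltn_ord.
exists P; split => //; split.
- move=> i; case: (ltnP i m) => [lt | ge].
    rewrite (PE _ lt); apply/andP; split.
      rewrite pasteE /= ltn_ord -[nat_of_ord i]/(nat_of_ord (Ordinal lt)) entry_at_ord.
      by rewrite (pivot1 (L1 _)).
    apply/forallP => c; apply/implyP => cp.
    have cd : (c < d)%N := ltn_trans cp (ltn_ord (pL (Ordinal lt))).
    by rewrite pasteE cd (entry_atE _ lt cd) (pivot0 (L1 _)).
  have [pR dQ] := RQ i ge; rewrite PQ //; apply/andP; split.
    by rewrite pasteE ltnNge dQ (pivot1 pR).
  apply/forallP => c; apply/implyP => cp; rewrite pasteE.
  by case: ifP => _; [rewrite entry_at_out | rewrite (pivot0 pR)].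
- move=> i i' lt; case: (ltnP i' m) => [lt' | ge'].
    by rewrite (PE _ (ltn_trans lt lt')) (PE _ lt'); apply: L2.
  rewrite (PQ i') //; case: (ltnP i m) => [lti | gei]; last by rewrite PQ // Q2.
  by apply: leq_trans (Pd _ lti) (proj2 (RQ _ ge')).
- move=> i i' ne; rewrite pasteE; case: (ltnP i m) => [lt | ge].
    rewrite Pd //; case: (ltnP i' m) => [lt' | ge']; last exact: entry_at_out.
    rewrite (PE _ lt) (entry_atE _ lt' (ltn_ord _)).
    rewrite (_ : Ordinal _ = pL (Ordinal lt)); last exact: val_inj.
    apply: L3.
    by apply: contra ne => /eqP [] e; apply/eqP/val_inj.
  by rewrite PQ // ltnNge (proj2 (RQ _ ge)) Q3.
Qed.

Lemma ulblock_pivot_map N P : pivot_map N P -> (forall i, (P i < d)%N = (i < m)%N) ->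
  is_rref (ulblock N) /\ paste (ulblock N) N = N.
Proof.
move=> [N1 N2 N3] Pd; split.
  have /fin_all_exists[pL pLE] (i : 'I_m) : exists c : 'I_d, val c = P (widen_ord mk i).
    have lt : (P (widen_ord mk i) < d)%N by rewrite Pd /= ltn_ord.
    by exists (Ordinal lt).
  have wpL i : widen_ord dn (pL i) = P (widen_ord mk i) by apply: val_inj; rewrite /= pLE.
  apply/is_rrefP; exists pL; split.
  - move=> i; apply/andP; split; first by rewrite ulblockE wpL (pivot1 (N1 _)).
    apply/forallP => c; apply/implyP => cp; rewrite ulblockE (pivot0 (N1 _)) //.
    by rewrite -wpL.
  - by move=> i i' lt; rewrite !pLE; apply: N2.
  - by move=> i i' ne; rewrite ulblockE wpL N3.
apply/matrixP => i c; rewrite pasteE; case: ifP => // cd.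
case: (ltnP i m) => [lt | ge].
  by rewrite (entry_atE _ lt cd) ulblockE; congr (N _ _); apply: val_inj.
rewrite entry_at_out //; symmetry; apply: (pivot0 (N1 i)).
by apply: (leq_trans cd); rewrite leqNgt Pd -leqNgt.
Qed.

Lemma card_rref_block (S : {set 'M[F]_(k, n)}) (R : 'M[F]_(k, n)) :
  (forall N, N \in S -> exists P, [/\ pivot_map N P, forall i, (P i < d)%N = (i < m)%N
        & forall i (c : 'I_n), (d <= c)%N -> N i c = R i c]) ->
  (forall L : 'M[F]_(m, d), is_rref L -> paste L R \in S) ->
  #|S| = #|[set L : 'M[F]_(m, d) | is_rref L]|.
Proof.
move=> S_block paste_S.
have -> : S = paste^~ R @: [set L : 'M[F]_(m, d) | is_rref L].
  apply/setP => N; apply/idP/imsetP => [NS | [L]]; last by rewrite inE => /paste_S LS ->.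
  have [P [NP Pd NR]] := S_block N NS; have [rN pN] := ulblock_pivot_map NP Pd.
  by exists (ulblock N); rewrite ?inE // -(eq_paste _ NR) pN.
by apply: card_imset; apply: can_inj (pasteK R).
Qed.

End Blocks.

(** * Counting reduced row echelon matrices *)

Section RrefCount.
Variable F : finFieldType.

Definition rref_count m p := #|[set L : 'M[F]_(m, p) | is_rref L]|.

Lemma rref_count0 p : rref_count 0 p = 1%N.
Proof.
rewrite /rref_count (_ : [set L : 'M[F]_(0, p) | is_rref L] = setT) ?cardsT ?card_mx //.
by apply/setP => L; rewrite !inE; apply/and3P; split; apply/forallP => -[].
Qed.

Lemma rref_countS0 m : rref_count m.+1 0 = 0%N.
Proof.
apply/eqP; rewrite cards_eq0; apply/eqP/setP => L; rewrite !inE.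
by apply/negP => /and3P[/forallP/(_ ord0)/existsP[[]]].
Qed.

Lemma ge_ord_max m (i : 'I_m.+1) : (m <= i)%N -> i = ord_max.
Proof. by move=> ge; apply/val_inj/eqP; rewrite eqn_leq ge -ltnS ltn_ord. Qed.

Lemma card_rref_pivot_last m p :
  #|[set L : 'M[F]_(m.+1, p.+1) | is_rref L & [exists i, is_pivot L i ord_max]]| =
  rref_count m p.
Proof.
apply: (card_rref_block (leqnSn m) (leqnSn p) (R := delta_mx ord_max ord_max)).
- move=> N; rewrite inE => /andP[/is_rrefP[P NP] /existsP[i0 pi0]].
  have [N1 N2 _] := NP.
  have Pi0 : P i0 = ord_max by rewrite (pivot_uniq pi0 (N1 i0)).
  have i0_max : i0 = ord_max.
    apply: ge_ord_max; rewrite leqNgt; apply/negP => /(N2 _ ord_max).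
    by rewrite Pi0 ltnNge -ltnS ltn_ord.
  have Pmax : P ord_max = ord_max by rewrite -i0_max.
  exists P; split => // [i | i c pc].
    have [lt | ge] := ltnP i m; last by rewrite (ge_ord_max ge) Pmax ltnn.
    by have := N2 i ord_max lt; rewrite Pmax.
  by rewrite (ge_ord_max pc) mxE eqxx andbT -{1}Pmax (pivot_map_col NP).
- move=> L /is_rrefP[pL LpL].
  have [] := pivot_map_paste (leqnSn p)
    (R := delta_mx (@ord_max m) (@ord_max p)) (Q := fun _ => ord_max) LpL.
  + move=> i /ge_ord_max ->; split => //; apply/andP; split; first by rewrite mxE !eqxx.
    apply/forallP => c; apply/implyP => lt.
    by rewrite mxE eqxx -(inj_eq val_inj) /= (ltn_eqF lt).
  + by move=> i i' /ge_ord_max -> /= lt; have := ltn_ord i'; lia.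
  + by move=> i i' /ge_ord_max -> ne; rewrite mxE eqxx andbT (negbTE ne).
  move=> P [LP PQ _]; rewrite inE; apply/andP; split; first by apply/is_rrefP; exists P.
  have [P1 _ _] := LP; apply/existsP; exists ord_max.
  by have := P1 ord_max; rewrite (PQ ord_max (leqnn _)).
Qed.

Lemma card_rref_last_col m p (v : 'cV[F]_m.+1) :
  #|[set L : 'M[F]_(m.+1, p.+1) | [&& is_rref L, ~~ [exists i, is_pivot L i ord_max]
      & col ord_max L == v]]| = rref_count m.+1 p.
Proof.
pose R : 'M[F]_(m.+1, p.+1) := \matrix_(i, c) v i 0.
apply: (card_rref_block (leqnn _) (leqnSn p) (R := R)).
- move=> N; rewrite inE => /and3P[/is_rrefP[P NP] /existsPn no_last /eqP Nv].
  have [N1 _ _] := NP; exists P; split => // [i | i c pc].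
    rewrite ltn_ord; have := ltn_ord (P i); rewrite ltnS leq_eqVlt => /orP[/eqP e|//].
    by have := no_last i; rewrite (_ : ord_max = P i) ?N1 //; apply: val_inj.
  by rewrite (ge_ord_max pc) mxE -Nv mxE.
- move=> L /is_rrefP[pL LpL].
  have [] := pivot_map_paste (leqnSn p) (R := R) (Q := fun _ => ord_max) LpL;
    try by move=> i; rewrite leqNgt ltn_ord.
  move=> P [LP _ Pd]; rewrite inE; apply/and3P; split; first by apply/is_rrefP; exists P.
    apply/existsPn => i; apply: contraTN (Pd i (ltn_ord i)) => pi.
    have [P1 _ _] := LP; by rewrite -(pivot_uniq pi (P1 i)) ltnn.
  by apply/eqP/matrixP => i c; rewrite ord1 !mxE /= ltnn.
Qed.

Lemma rref_countSS m p :
  rref_count m.+1 p.+1 = (rref_count m p + #|F| ^ m.+1 * rref_count m.+1 p)%N.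
Proof.
set S := [set L : 'M[F]_(m.+1, p.+1) | is_rref L].
set B := [set L : 'M[F]_(m.+1, p.+1) | [exists i, is_pivot L i ord_max]].
rewrite [rref_count m.+1 p.+1]/rref_count -/S -(cardsID B S); congr (_ + _)%N.
  by rewrite -(card_rref_pivot_last m p); apply: eq_card => L; rewrite !inE.
rewrite -sum1_card (partition_big (fun L => col ord_max L) predT) //=.
rewrite (eq_bigr (fun _ => rref_count m.+1 p)) ?sum_nat_const ?card_mx ?muln1 //.
move=> v _; rewrite -(card_rref_last_col p v) -sum1_card.
by apply: eq_bigl => L; rewrite !inE andbA [~~ _ && _]andbC.
Qed.

End RrefCount.

Definition qfall q p m := (\prod_(i < m) (q ^ (p - i) - 1))%N.

Lemma qfall_gt0 q m : (1 < q)%N -> (0 < qfall q m m)%N.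
Proof.
move=> q1; rewrite prodn_gt0 // => i; rewrite subn_gt0.
by rewrite -[X in (X < _)%N](expn0 q) ltn_exp2l // subn_gt0.
Qed.

Lemma qfall_eq0 q p m : (p < m)%N -> qfall q p m = 0%N.
Proof. by move=> lt; rewrite /qfall (bigD1 (Ordinal lt)) //= subnn expn0 subnn. Qed.

Lemma qfallSS q p m : qfall q p.+1 m.+1 = ((q ^ p.+1 - 1) * qfall q p m)%N.
Proof. by rewrite /qfall big_ord_recl subn0. Qed.

Lemma qfallS q p m : qfall q p m.+1 = (qfall q p m * (q ^ (p - m) - 1))%N.
Proof. by rewrite /qfall big_ord_recr. Qed.

Lemma gaussE q p m x : (1 < q)%N -> (x * qfall q m m)%N = qfall q p m -> gauss q p m = x.
Proof.
move=> q1 E; rewrite /gauss -/(qfall q p m) -/(qfall q m m).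
case: ifP => [_ | /negbT]; first by rewrite -E mulnK ?qfall_gt0.
rewrite -ltnNge => /(qfall_eq0 q) E0; move: E; rewrite E0 => /eqP.
by rewrite muln_eq0 (gtn_eqF (qfall_gt0 _ q1)) orbF => /eqP.
Qed.

(* The q-Pascal rule [p+1, m+1] = [p, m] + q^(m+1) [p, m+1] cleared of
   denominators, with a = q^(m+1) and b = q^(p-m). *)
Lemma q_pascal_mul a b x y D N : (0 < a)%N -> (0 < b)%N ->
  (x * D = N)%N -> (y * ((a - 1) * D) = N * (b - 1))%N ->
  ((x + a * y) * ((a - 1) * D) = (a * b - 1) * N)%N.
Proof.
by case: a => // a _; case: b => // b _ <-; rewrite !subn1 /= => yE; nia.
Qed.

Section RrefGauss.
Variable F : finFieldType.

Lemma rref_count_qfall m p :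
  (rref_count F m p * qfall #|F| m m)%N = qfall #|F| p m.
Proof.
have q1 := card_finNzRing_gt1 F; set q := #|F|.
elim: p m => [|p IH] [|m].
- by rewrite rref_count0 /qfall !big_ord0.
- by rewrite rref_countS0 mul0n qfall_eq0.
- by rewrite rref_count0 /qfall !big_ord0.
rewrite rref_countSS !qfallSS.
have q_pos k : (0 < q ^ k)%N by rewrite expn_gt0 ltnW.
have := IH m.+1; rewrite qfallSS qfallS => IH1.
rewrite (q_pascal_mul (q_pos _) (q_pos (p - m)%N) (IH m) IH1).
have [le | lt] := leqP m p; first by rewrite -expnD addSn subnKC.
by rewrite qfall_eq0 // !muln0.
Qed.

Lemma rref_count_gauss m p : rref_count F m p = gauss #|F| p m.
Proof. by apply/esym/gaussE; [exact: card_finNzRing_gt1 | exact: rref_count_qfall]. Qed.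

End RrefGauss.

(** * The extended representation *)

Section ExtendedRepresentation.
Variable F : finFieldType.

(* [EXT k X] is [ext_mx (RE k X)] by definition. *)
Definition ext_mx k n (M : 'M[F]_(k, n)) : 'M[F]_(k.+1, n) :=
  col_mx (\row_c (if [exists i, is_pivot M i c] then 1 else 0)) M.

Lemma ext_mx_top k n (M : 'M[F]_(k, n)) c :
  ext_mx M ord0 c = if [exists i, is_pivot M i c] then 1 else 0.
Proof.
have -> : (ord0 : 'I_k.+1) = lshift k (ord0 : 'I_1) by apply: val_inj.
by apply: etrans (col_mxEu _ _ _ _) _; rewrite mxE.
Qed.

Lemma ext_mx_lift k n (M : 'M[F]_(k, n)) i c : ext_mx M (lift ord0 i) c = M i c.
Proof.
have -> : lift ord0 i = rshift 1 i :> 'I_k.+1 by apply: val_inj.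
exact: col_mxEd.
Qed.

Lemma has_pivot_map k n (M : 'M[F]_(k, n)) P c :
  pivot_map M P -> [exists i, is_pivot M i c] = [exists i, P i == c].
Proof.
case=> P1 _ _; apply/existsP/existsP => [[i pi] | [i /eqP <-]]; last by exists i.
by exists i; rewrite (pivot_uniq pi (P1 i)).
Qed.

Section FirstColumns.
Variables (n j : nat).
Hypothesis jn : (j <= n)%N.

Definition firstcol_idx (c : 'I_j) : 'I_n := cast_ord (subnK jn) (rshift (n - j) c).

Lemma firstcol_idx_inj : injective firstcol_idx.
Proof. by move=> c c' /cast_ord_inj/rshift_inj. Qed.

Lemma firstcolsE r (E : 'M[F]_(r, n)) i c : firstcols j E i c = E i (firstcol_idx c).
Proof.
rewrite mxE /entry (insubT (fun x => x < n)%N (ltn_ord (firstcol_idx c))).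
by congr (E i _); apply: val_inj.
Qed.

Lemma firstcols_eqP r (E E' : 'M[F]_(r, n)) :
  firstcols j E = firstcols j E' <->
  (forall i (c : 'I_n), (n - j <= c)%N -> E i c = E' i c).
Proof.
split => [/matrixP EE i c le | EE]; last first.
  by apply/matrixP => i c; rewrite !firstcolsE EE //= leq_addr.
have lt : (c - (n - j) < j)%N by have := ltn_ord c; lia.
have := EE i (Ordinal lt); rewrite !firstcolsE (_ : firstcol_idx _ = c) //.
by apply: val_inj => /=; lia.
Qed.

Lemma firstcols_ext_eqP k (M M' : 'M[F]_(k, n)) :
  firstcols j (ext_mx M) = firstcols j (ext_mx M') <->
  (forall c : 'I_n, (n - j <= c)%N ->
    [exists i, is_pivot M i c] = [exists i, is_pivot M' i c] /\ forall i, M i c = M' i c).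
Proof.
rewrite firstcols_eqP; split => [E c le | E i c le].
  split => [|i]; last by have := E (lift ord0 i) c le; rewrite !ext_mx_lift.
  have := E ord0 c le; rewrite !ext_mx_top.
  by do 2 case: ifP => //; move=> _ _ /eqP; rewrite ?oner_eq0 // eq_sym oner_eq0.
have [E1 E2] := E c le; case: (unliftP ord0 i) => [i' -> | ->].
  by rewrite !ext_mx_lift.
by rewrite !ext_mx_top E1.
Qed.

Lemma card_firstcols_pivots k (M : 'M[F]_(k, n)) P : pivot_map M P ->
  #|[set c : 'I_j | firstcols j (ext_mx M) ord0 c == 1]| = #|[set i | (n - j <= P i)%N]|.
Proof.
move=> MP; rewrite -(card_imset _ firstcol_idx_inj) -(card_imset _ (pivot_map_inj MP)).
apply: eq_card => c; apply/imsetP/imsetP => [[c' ] | [i]]; rewrite inE.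
  rewrite firstcolsE ext_mx_top (has_pivot_map _ MP).
  case: ifP => [/existsP[i /eqP Pi] _ -> | _]; last by rewrite eq_sym oner_eq0.
  by exists i; rewrite // inE Pi /= leq_addr.
move=> le ->; have lt : (P i - (n - j) < j)%N by have := ltn_ord (P i); lia.
have Pi : firstcol_idx (Ordinal lt) = P i by apply: val_inj => /=; lia.
exists (Ordinal lt); rewrite // inE firstcolsE ext_mx_top Pi (has_pivot_map _ MP).
by case: existsP => // -[]; exists i.
Qed.

End FirstColumns.

Lemma firstcols_pivot_threshold k n j (A : 'M[F]_(k.+1, j)) (M : 'M[F]_(k, n)) P :
  (j <= n)%N -> pivot_map M P -> firstcols j (ext_mx M) = A ->
  forall i, (P i < n - j)%N = (i < k - #|[set c : 'I_j | A ord0 c == 1%R]|)%N.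
Proof.
move=> jn MP <- i; rewrite (card_firstcols_pivots jn MP).
exact: nondecreasing_threshold (pivot_map_leq MP) i.
Qed.

Lemma card_rref_firstcols k n j (A : 'M[F]_(k.+1, j)) (M0 : 'M[F]_(k, n)) :
  (j <= n)%N -> is_rref M0 -> firstcols j (ext_mx M0) = A ->
  #|[set M : 'M[F]_(k, n) | is_rref M && (firstcols j (ext_mx M) == A)]| =
  rref_count F (k - #|[set c : 'I_j | A ord0 c == 1]|) (n - j).
Proof.
move=> jn /is_rrefP[P0 M0P] M0A; set w := #|[set c : 'I_j | _]|.
have [_ M02 M03] := M0P.
have P0d := firstcols_pivot_threshold jn M0P M0A.
apply: (card_rref_block (leq_subr w k) (leq_subr j n) (R := M0)).
- move=> M; rewrite inE => /andP[/is_rrefP[P MP] /eqP MA].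
  exists P; split => // [i | i c le]; first exact: (firstcols_pivot_threshold jn MP MA i).
  by have /(firstcols_ext_eqP jn)/(_ c le)[_ ->] := etrans MA (esym M0A).
- move=> L /is_rrefP[pL LpL].
  have [] := pivot_map_paste (leq_subr j n) (R := M0) (Q := P0) LpL.
  + move=> i ge; split; first by case: M0P.
    by rewrite leqNgt P0d -leqNgt.
  + by move=> i i' _; apply: M02.
  + by move=> i i' _; apply: M03.
  move=> P [LP PP0 Pd]; rewrite inE; apply/andP; split; first by apply/is_rrefP; exists P.
  rewrite -M0A; apply/eqP/(firstcols_ext_eqP jn) => c le; split => [|i]; last first.
    by rewrite pasteE ltnNge le.
  rewrite (has_pivot_map _ LP) (has_pivot_map _ M0P).
  apply/existsP/existsP => -[i /eqP Pic]; exists i; apply/eqP; rewrite -Pic.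
    by rewrite PP0 // leqNgt; apply: contraL le => /Pd; rewrite -Pic -ltnNge.
  by rewrite PP0 // leqNgt -P0d -leqNgt Pic.
Qed.

End ExtendedRepresentation.

Section Grassmannian.
Variable F : finFieldType.

Lemma RE_Grass n k (X : 'M[F]_n) :
  X \in Grass F n k -> is_rref (RE k X) /\ <<RE k X>>%MS = X.
Proof.
rewrite inE => /andP[/eqP gX /eqP rX]; have [M /andP[rM MX]] := rref_exists rX.
rewrite /RE; case: pickP => [M' /andP[rM' /eqP //] | none].
have gM : <<M>>%MS = X by rewrite -gX; apply/genmxP.
by move: (none M); rewrite rM gM eqxx.
Qed.

Lemma RE_genmx n k (M : 'M[F]_(k, n)) :
  is_rref M -> <<M>>%MS \in Grass F n k /\ RE k <<M>>%MS = M.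
Proof.
move=> rM; have /is_rrefP[P MP] := rM.
have MG : <<M>>%MS \in Grass F n k.
  by rewrite inE genmx_id mxrank_gen (pivot_map_rank MP) !eqxx.
split => //; have [rR gR] := RE_Grass MG.
by apply: rref_uniq => //; apply/genmxP.
Qed.

Lemma card_Grass_RE n k (Pr : pred 'M[F]_(k, n)) :
  #|[set X in Grass F n k | Pr (RE k X)]| = #|[set M | is_rref M && Pr M]|.
Proof.
have -> : [set X in Grass F n k | Pr (RE k X)] =
           (fun M => <<M>>%MS) @: [set M | is_rref M && Pr M].
  apply/setP => X; apply/idP/imsetP => [| [M]].
    rewrite inE => /andP[XG PX]; have [rX gX] := RE_Grass XG.
    by exists (RE k X); rewrite ?inE ?rX.
  move=> /[!inE] /andP[rM PM] ->; have [MG RM] := RE_genmx rM.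
  by rewrite RM PM andbT; move: MG; rewrite inE.
apply: card_in_imset => M M'; rewrite !inE => /andP[rM _] /andP[rM' _] e.
by rewrite -(proj2 (RE_genmx rM)) e (proj2 (RE_genmx rM')).
Qed.

End Grassmannian.

Theorem lemma3 (F : finFieldType) (n k j : nat) (A : 'M[F]_(k.+1, j)) :
  (k <= n)%N -> (1 <= j)%N -> (j <= n)%N ->
  (exists2 Y, Y \in Grass F n k & firstcols j (EXT k Y) = A) ->
  #|[set X in Grass F n k | firstcols j (EXT k X) == A]| =
    gauss #|F| (n - j) (k - #|[set c : 'I_j | A ord0 c == 1]|).
Proof.
move=> _ _ jn [Y /RE_Grass[rY _] YA].
rewrite (card_Grass_RE (fun M => firstcols j (ext_mx M) == A)).
by rewrite (card_rref_firstcols jn rY YA) rref_count_gauss.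
Qed.
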